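(* Let $M$ be a canonical dtpla with $P_M=\{\hat p_1,\dots,\hat p_n\}$ and let $N$ be a total dtop, all of whose states are reachable, with $Q_N\subseteq T_\Delta(Q_M\times P_M)^n$. Let $\varphi:Q_N\times P_M\to T_\Delta(Q_M\times P_M)$ be given by $\varphi((t_1,\dots,t_n),\hat p_i)=t_i$, and assume $\varphi(q,p)\in T_\Delta(\{\langle\bar q,p\rangle\mid\bar q\in Q_M,\rho_M(\bar q)=p\})$ for all $q\in Q_N$, $p\in P_M$. Suppose $N$ satisfies: (i) $A_N\Phi=\sqcap\{A_M(p)\Omega\mid p\in P_M\}$; (ii) for all $v\in\mathbb N_+^*$, $q\in Q_N$, $p\in P_M$: if $A_N/v=q(x_0)$ then $\varphi(q,p)=A_M(p)\Omega/v$; (iii) for all $q\in Q_N$ and $a\in\Sigma^{(k)}$: $\mathrm{rhs}_N(q,a)\Phi=\sqcap\{\mathrm{rhs}_{M,\varphi}(q,a,p_1,\dots,p_k)\Omega\mid p_1,\dots,p_k\in P_M\}$; (iv) for all $q,\bar q\in Q_N$, $a\in\Sigma^{(k)}$, $i\in[k]$, all trees $s_j\in T_\Sigma$ ($j\in[k]$, $j\neq i$) with $p_j=\delta_M(s_j)$, all $p\in P_M$ and all $v\in V_\bot(\mathrm{rhs}_N(q,a)\Phi)$: if $\mathrm{rhs}_N(q,a)/v=\bar q(x_i)$ then $\varphi(\bar q,p)=\mathrm{rhs}_{M,\varphi}(q,a,p_1,\dots,p_{i-1},p,p_{i+1},\dots,p_k)\Psi_{iM}/v$, where $\Psi_{iM}$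 is the substitution $[\tilde q(x_j)\leftarrow\tilde q_M(s_j)\mid\tilde q\in Q_M,\ j\in[k],\ j\ne i]$ followed by $\Omega$. Then $N$ is equivalent to $M$, i.e., $[\![N]\!]=[\![M]\!]$.
   Context: Trees and patterns. $T_\Delta(Z)$ is the set of trees over ranked alphabet $\Delta$ with extra nullary symbols $Z$; $t/v$ is the subtree at node $v\in\mathbb N_+^*$; $\bot$ is a special nullary symbol; $V_\bot(t)$ is the set of nodes labelled $\bot$. $\sqcap T$ is the greatest lower bound of a finite nonempty set $T$ of trees w.r.t. the order $t\sqsubseteq t'$ ($t'$ obtained from $t$ by replacing occurrences of $\bot$ by trees): the largest common prefix with $\bot$ at the highest nodes of disagreement. A $\Sigma$-context is $C\in T_\Sigma(\{\bot\})$ with exactly one $\bot$. $Q(Y)=\{q(y)\mid q\in Q,y\in Y\}$, $X=\{x_0,x_1,\dots\}$, $X_k=\{x_1,\dots,x_k\}$. Dtlas. A dtla $M$ from $\Sigma$ to $\Delta$ consists of a finite set $Q_M$ of states, a total deterministic bottom-up tree automaton with finite state set $P_M$ and transitions $\delta(a,p_1,\dots,p_k)$, extended to $\delta_M:T_\Sigma\to P_M$ ($[\![p]\!]_M=\delta_M^{-1}(p)$), axioms $A_M(p)\in T_\Delta(Q_M(\{x_0\}))$, and at most one rule $q(a(x_1\langle p_1\rangle,\dots,x_k\langle p_k\rangle))\to\mathrm{rhs}_M(q,a,p_1,\dots,p_k)\in T_\Delta(Q_M(X_k))$ per $q,a,p_1,\dots,p_k$. Semantics: $q_M(a(s_1,\dots,s_k))=\mathrm{rhs}_M(q,a,\delta_M(s_1),\dots,\delta_M(s_k))[q'(x_i)\leftarrow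 q'_M(s_i)]$, $M(s)=A_M(\delta_M(s))[q(x_0)\leftarrow q_M(s)]$. A dtop is a dtla with a single look-ahead state $\bot$; a total dtop $N$ has an axiom $A_N\in T_\Delta(Q_N(\{x_0\}))$ and, for every $q\in Q_N$, $a\in\Sigma^{(k)}$, exactly one rule $q(a(x_1,\dots,x_k))\to\mathrm{rhs}_N(q,a)\in T_\Delta(Q_N(X_k))$. A dtpla has $|P_M|\ge2$. $M(C[p])\in T_\Delta(Q_M\times P_M)$ is the output on context $C$ with the hole treated as a leaf of look-ahead state $p$ and $q_M(p)=\langle q,p\rangle$; $N(C)=N(C[\bot])$. A state is reachable if $\langle q,p\rangle$ labels a node of $M(C[p])$ for some context $C$ and $p$. $M$ is la-uniform if there is $\rho_M:Q_M\to P_M$ with domain of $[\![q]\!]_M$ equal to $[\![\rho_M(q)]\!]_M$, every $q(x_0)$ in $A_M(p)$ having $\rho_M(q)=p$, every $q'(x_i)$ in $\mathrm{rhs}_M(q,a,p_1,\dots,p_k)$ having $\rho_M(q')=p_i$, and the rule for $q,a,p_1,\dots,p_k$ existing iff $\delta(a,p_1,\dots,p_k)=\rho_M(q)$. Earliest: no state $q$ and $d\in\Delta$ such that $q(s)$ has root label $d$ for all $s$ in the domain of $[\![q]\!]$. Canonical: total, la-uniform, earliest, all states reachable, distinct states have distinct translations. For $t\in T_\Delta(Q_M(X))$, $t\Omega$ replaces each $q(x_i)$ by the leaf $\langle q,\rho_M(q)\rangle$. For $t\in T_\Delta(Q_N(X))$, $t\Phi$ replaces each $q(x_i)$ by $\bot$.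 For $q\in Q_N$, $a\in\Sigma^{(k)}$, $p_1,\dots,p_k\in P_M$ and $p=\delta(a,p_1,\dots,p_k)$: $\mathrm{rhs}_{M,\varphi}(q,a,p_1,\dots,p_k)=\varphi(q,p)[\langle\bar q,p\rangle\leftarrow\mathrm{rhs}_M(\bar q,a,p_1,\dots,p_k)\mid\bar q\in Q_M]\in T_\Delta(Q_M(X_k))$. *)

From Stdlib Require List.
From mathcomp Require Import all_boot.
Set Implicit Arguments. Unset Strict Implicit. Unset Printing Implicit Defensive.

(* Trees T_D(Z): internal nodes labelled by D, extra nullary leaves from Z. *)
Inductive tree (D Z : Type) : Type :=
  | Leaf of Z
  | Node of D & seq (tree D Z).
Arguments Leaf {D Z}.
Arguments Node {D Z}.

Section Trees.
Variables (D : Type).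

Fixpoint wf {Z} (rk : D -> nat) (t : tree D Z) : bool :=
  match t with
  | Leaf _ => true
  | Node d ts => (size ts == rk d) && all (wf rk) ts
  end.

Fixpoint leaves {Z} (t : tree D Z) : seq Z :=
  match t with
  | Leaf z => [:: z]
  | Node _ ts => flatten (map leaves ts)
  end.

Fixpoint tmap {Z Y} (f : Z -> Y) (t : tree D Z) : tree D Y :=
  match t with
  | Leaf z => Leaf (f z)
  | Node d ts => Node d (map (tmap f) ts)
  end.

Fixpoint oseq {A} (s : seq (option A)) : option (seq A) :=
  match s with
  | [::] => Some [::]
  | o :: s' => match o, oseq s' with Some x, Some xs => Some (x :: xs) | _, _ => None end
  end.

Fixpoint osubst {Z Y} (f : Z -> option (tree D Y)) (t : tree D Z) : option (tree D Y) :=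
  match t with
  | Leaf z => f z
  | Node d ts => omap (Node d) (oseq (map (osubst f) ts))
  end.

(* t/v for a node v in N_+^* (1-based child indices) *)
Fixpoint subtree {Z} (t : tree D Z) (v : seq nat) : option (tree D Z) :=
  match v with
  | [::] => Some t
  | i :: v' => match t with
               | Leaf _ => None
               | Node _ ts => if (0 < i) && (i <= size ts)
                              then subtree (nth t ts i.-1) v' else None
               end
  end.

(* Trees with bottom: T_D(Z u {bot}), where the leaf [None] is bot. *)
(* t [= t' : t' is obtained from t by replacing occurrences of bot by trees *)
Fixpoint tle {Z} (t t' : tree D (option Z)) {struct t} : Prop :=
  match t, t' with
  | Leaf None, _ => True
  | Leaf (Some z), Leaf (Some z') => z = z'
  | Node d ts, Node d' ts' =>
      d = d' /\
      (fix go (us us' : seq (tree D (option Z))) : Prop :=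
         match us, us' with
         | [::], [::] => True
         | u :: us1, u' :: us1' => tle u u' /\ go us1 us1'
         | _, _ => False
         end) ts ts'
  | _, _ => False
  end.

Definition is_glb {Z} (g : tree D (option Z)) (S : tree D (option Z) -> Prop) : Prop :=
  (forall t, S t -> tle g t) /\
  (forall h, (forall t, S t -> tle h t) -> tle h g).

Definition is_bot_node {Z} (t : tree D (option Z)) (v : seq nat) : Prop :=
  subtree t v = Some (Leaf None).

Definition root_is {Z} (d : D) (t : tree D Z) : Prop :=
  match t with Node d' _ => d' = d | Leaf _ => False end.

End Trees.

(* dtla from S to D with states Q and look-ahead states P.
   [dl_delta a [p1..pk]] = delta(a,p1,...,pk) (total bottom-up automaton),
   [dl_ax p] = A_M(p) in T_D(Q({x0})) (a leaf q stands for q(x0)),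
   [dl_rhs q a [p1..pk]] = Some rhs_M(q,a,p1..pk) in T_D(Q(X_k)) if the rule
   exists (a leaf (q',i) stands for q'(x_i)), None otherwise. *)
Record dtla (S D Q P : Type) := Dtla {
  dl_delta : S -> seq P -> P;
  dl_ax : P -> tree D Q;
  dl_rhs : Q -> S -> seq P -> option (tree D (Q * nat)) }.

Record dtop (S D Q : Type) := Dtop {
  dt_ax : tree D Q;
  dt_rhs : Q -> S -> tree D (Q * nat) }.

(* a dtop is a dtla with the single look-ahead state bot (here: tt) *)
Definition dtop_as_dtla S D Q (N : dtop S D Q) : dtla S D Q unit :=
  Dtla (fun _ _ => tt) (fun _ => dt_ax N) (fun q a _ => Some (dt_rhs N q a)).

Section Semantics.
Variables (S D Q P : Type) (M : dtla S D Q P).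

(* generalised semantics on trees T_S(Z): leaf z has look-ahead state lp z
   and the output of state q on it is lo q z *)
Section Gen.
Variables (Z Y : Type) (lp : Z -> P) (lo : Q -> Z -> option (tree D Y)).

Fixpoint gstate (s : tree S Z) : P :=
  match s with
  | Leaf z => lp z
  | Node a ss => dl_delta M a (map gstate ss)
  end.

Fixpoint grun (s : tree S Z) : Q -> option (tree D Y) :=
  match s with
  | Leaf z => fun q => lo q z
  | Node a ss =>
      let ps := map gstate ss in
      let rs := map grun ss in
      fun q => match dl_rhs M q a ps with
               | None => None
               | Some r => osubst (fun z : Q * nat =>
                             if z.2 is i.+1 then nth (fun _ => None) rs i z.1 else None) r
               end
  end.

Definition gtrans (s : tree S Z) : option (tree D Y) :=
  osubst (fun q => grun s q) (dl_ax M (gstate s)).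
End Gen.

Definition stateM (s : tree S void) : P := gstate (@of_void P) s.
Definition qM (q : Q) (s : tree S void) : option (tree D void) :=
  grun (@of_void P) (fun _ z => of_void _ z) s q.
Definition transM (s : tree S void) : option (tree D void) :=
  gtrans (@of_void P) (fun _ z => of_void _ z) s.

(* M(C[p]) for a context C in T_S({bot}) (leaf tt is the hole) *)
Definition ctx_out (C : tree S unit) (p : P) : option (tree D (Q * P)) :=
  gtrans (fun _ => p) (fun q _ => Some (Leaf (q, p))) C.

Variables (rkS : S -> nat) (rkD : D -> nat).

Definition is_context (C : tree S unit) : Prop := wf rkS C /\ size (leaves C) = 1.

End Semantics.

Section Properties.
Variables (S D : Type) (rkS : S -> nat) (rkD : D -> nat).

Definition dtla_wf Q P (M : dtla S D Q P) : Prop :=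
  (forall p, wf rkD (dl_ax M p)) /\
  (forall q a ps r, size ps = rkS a -> dl_rhs M q a ps = Some r ->
     wf rkD r /\ forall z, List.In z (leaves r) -> (0 < z.2 <= rkS a)).

Definition dtop_wf Q (N : dtop S D Q) : Prop :=
  wf rkD (dt_ax N) /\
  (forall q a, wf rkD (dt_rhs N q a) /\
     forall z, List.In z (leaves (dt_rhs N q a)) -> (0 < z.2 <= rkS a)).

Variables (Q P : Type) (M : dtla S D Q P).

Definition reachable (q : Q) : Prop :=
  exists C p t, is_context rkS C /\ ctx_out M C p = Some t /\ List.In (q, p) (leaves t).

Definition total_dtla : Prop := forall s, wf rkS s -> transM M s <> None.

Definition la_uniform (rho : Q -> P) : Prop :=
  (forall q s, wf rkS s -> (qM M q s <> None <-> stateM M s = rho q)) /\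
  (forall p q, List.In q (leaves (dl_ax M p)) -> rho q = p) /\
  (forall q a ps r, size ps = rkS a -> dl_rhs M q a ps = Some r ->
     forall q' i, List.In (q', i) (leaves r) -> rho q' = nth (rho q') ps i.-1) /\
  (forall q a ps, size ps = rkS a ->
     (dl_rhs M q a ps <> None <-> dl_delta M a ps = rho q)).

Definition earliest : Prop :=
  ~ exists (q : Q) (d : D), forall s u, wf rkS s -> qM M q s = Some u -> root_is d u.

Definition distinct_translations : Prop :=
  forall q q' : Q, q <> q' -> exists s, wf rkS s /\ qM M q s <> qM M q' s.

Definition canonical (rho : Q -> P) : Prop :=
  [/\ total_dtla, la_uniform rho, earliest, forall q, reachable q
    & distinct_translations].
End Properties.

Section Ops.
Variables (S D : Type) (QM : Type) (PM : eqType) (M : dtla S D QM PM) (rho : QM -> PM).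

Definition OmegaA (t : tree D QM) : tree D (QM * PM) := tmap (fun q => (q, rho q)) t.
Definition OmegaR (t : tree D (QM * nat)) : tree D (QM * PM) := tmap (fun z => (z.1, rho z.1)) t.
Definition nobot Z (t : tree D Z) : tree D (option Z) := tmap Some t.
Definition Phi Z W (t : tree D W) : tree D (option Z) := tmap (fun _ => None) t.

Variables (QN : Type) (phi : QN -> PM -> tree D (QM * PM)).

Definition rhsMphi (q : QN) (a : S) (ps : seq PM) : option (tree D (QM * nat)) :=
  let p := dl_delta M a ps in
  osubst (fun z : QM * PM => if z.2 == p then dl_rhs M z.1 a ps else None) (phi q p).

(* t Psi_{iM} : [q(x_j) <- q_M(s_j) | j <> i] followed by Omega;
   i is 1-based here, ss lists s_1..s_k (s_i is ignored) *)
Definition PsiM (i : nat) (ss : seq (tree S void)) (dflt : tree S void)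
    (t : tree D (QM * nat)) : option (tree D (QM * PM)) :=
  osubst (fun z : QM * nat =>
            if z.2 == i then Some (Leaf (z.1, rho z.1))
            else if z.2 is j.+1 then omap (tmap (@of_void _)) (qM M z.1 (nth dflt ss j))
            else None) t.
End Ops.
Arguments Phi {D Z W} t.

From Stdlib Require List.
From mathcomp Require Import all_boot.
Set Implicit Arguments. Unset Strict Implicit. Unset Printing Implicit Defensive.

(* Write phi(q, s) for the tree phi(q, delta_M(s)) in which every leaf
   <q', p> is replaced by q'_M(s).  The heart of the proof is the invariant
       q_N(s) = phi(q, s)          for every q in Q_N and every input tree s,
   proved by induction on s.  For s = a(s_1..s_k), the right-hand side
   unfolds to rhs_{M,phi}(q, a, p_1..p_k) with the children's outputs
   substituted, and condition (iii) says that rhs_N(q, a) Phi is a prefix of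
   that tree.  A substitution into a prefix and a substitution into the
   larger tree agree as soon as they agree below every leaf of the prefix
   (lemma [osubst_eq_by_prefix]); at a leaf q'(x_i) of rhs_N(q, a) this is
   exactly condition (iv) combined with the induction hypothesis for s_i.
   The same prefix argument with conditions (i) and (ii) at the axioms then
   turns the invariant into [[N]] = [[M]].

   Of the hypotheses of the theorem the argument uses the well-formedness of
   M and N, la-uniformity of M (so that rhs_{M,phi} is always defined), the
   shape of the leaves of phi, conditions (ii) and (iv), and the lower-bound
   halves of (i) and (iii). *)

Section SeqIn.
Variables A B : Type.

Lemma map_ext_In (f g : A -> B) s :
  (forall x, List.In x s -> f x = g x) -> map f s = map g s.
Proof.
elim: s => //= x s IH fg; rewrite (fg x (or_introl erefl)) IH // => y y_s.
exact: fg (or_intror y_s).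
Qed.

Lemma In_flatten (x : A) l s : List.In l s -> List.In x l -> List.In x (flatten s).
Proof.
elim: s => //= l0 s IH [<- | l_s] x_l; apply: List.in_or_app; first by left.
by right; exact: IH.
Qed.

Lemma flatten_In (x : A) s :
  List.In x (flatten s) -> exists2 l, List.In l s & List.In x l.
Proof.
elim: s => //= l0 s IH x_in.
case: (List.in_app_or _ _ _ x_in) => [x_l0 | /IH [l l_s x_l]].
  by exists l0 => //; left.
by exists l => //; right.
Qed.

Lemma nth_In (x0 : A) s j : j < size s -> List.In (nth x0 s j) s.
Proof. by elim: s j => //= x s IH [|j] j_lt; [left | right; exact: IH]. Qed.

Lemma all_In (P : pred A) s x : all P s -> List.In x s -> P x.
Proof. by elim: s => //= y s IH /andP [Py Ps] [<- | /IH ->]. Qed.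

Lemma map_eq_In (C : Type) (f : A -> C) (g : B -> C) s r y :
  map f s = map g r -> List.In y r -> exists2 x, List.In x s & f x = g y.
Proof.
elim: s r => [|x s IH] [|y0 r] //= [fx_gy0 eq_rest] [<- | y_r].
  by exists x; first left.
by have [x' x'_s] := IH r eq_rest y_r; exists x'; first right.
Qed.

Lemma map_nth_replace_self (f : A -> B) (d : A) s i :
  [seq (if j == i then f (nth d s i) else f (nth d s j)) | j <- iota 0 (size s)]
  = map f s.
Proof.
apply: (@eq_from_nth _ (f d)); rewrite !size_map ?size_iota // => j j_lt.
rewrite (nth_map 0) ?size_iota // nth_iota // add0n (nth_map d) //.
by case: eqP => // ->.
Qed.
End SeqIn.

Section OSeq.
Variable A : Type.

Lemma oseq_map (l : seq (option A)) xs : oseq l = Some xs -> l = map Some xs.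
Proof.
elim: l xs => [|[x|] l IH] xs //=; first by case=> <-.
by case E: (oseq l) => [ys|] // [<-]; rewrite (IH ys).
Qed.

Lemma oseq_mapSome (l : seq A) : oseq (map Some l) = Some l.
Proof. by elim: l => //= x l ->. Qed.

Lemma oseq_Some (l : seq (option A)) :
  (forall o, List.In o l -> o <> None) -> oseq l <> None.
Proof.
elim: l => //= [[x|] l IH] defined; last by case: (defined None (or_introl erefl)).
by case E: (oseq l) => //; case: IH => // o o_l; apply: defined; right.
Qed.

Lemma oseq_bind (B : Type) (f : A -> option B) (l : seq (option A)) :
  obind (fun xs => oseq (map f xs)) (oseq l) = oseq (map (obind f) l).
Proof.
elim: l => //= [[x|] l IH] //=.
by case E: (oseq l) IH => [xs|] /= <-; case: (f x).
Qed.
End OSeq.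

Section Trees.
Variable D : Type.

Section Induction.
Variables (Z : Type) (P : tree D Z -> Prop).
Hypotheses (PLeaf : forall z, P (Leaf z))
  (PNode : forall d ts, (forall t, List.In t ts -> P t) -> P (Node d ts)).

Fixpoint tree_ind_In (t : tree D Z) : P t :=
  match t with
  | Leaf z => PLeaf z
  | Node d ts => PNode d
      ((fix all_P (us : seq (tree D Z)) : forall u, List.In u us -> P u :=
          match us with
          | [::] => fun u u_in => match u_in with end
          | u0 :: us' => fun u u_in => match u_in with
              | or_introl u0_u => eq_ind u0 P (tree_ind_In u0) u u0_u
              | or_intror u_us' => all_P us' u u_us'
              end
          end) ts)
  end.
End Induction.

Lemma subtree_tmap Z Y (m : Z -> Y) v (u : tree D Z) :
  subtree (tmap m u) v = omap (tmap m) (subtree u v).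
Proof.
elim: v u => [|i v IH] [z|d us] //=; rewrite size_map.
case: ifP => // /andP [i_gt0 i_le]; have i_lt : i.-1 < size us by case: i i_gt0 i_le.
by rewrite -IH (set_nth_default (tmap m (Node d us))) ?size_map // (nth_map (Node d us)).
Qed.

Lemma leaves_subtree Z v (t u : tree D Z) z :
  subtree t v = Some u -> List.In z (leaves u) -> List.In z (leaves t).
Proof.
elim: v t => [|i v IH] t; first by case=> ->.
case: t => [y|d ts] //=; case: ifP => // /andP [i_gt0 i_le] sub z_u; apply: In_flatten (IH _ sub z_u).
by apply: List.in_map; apply: nth_In; case: i i_gt0 i_le {sub}.
Qed.

Lemma osubst_ext Z Y (f g : Z -> option (tree D Y)) t :
  (forall z, List.In z (leaves t) -> f z = g z) -> osubst f t = osubst g t.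
Proof.
elim/tree_ind_In: t => [z|d ts IH] fg /=; first by apply: fg; left.
congr (omap _ (oseq _)); apply: map_ext_In => u u_ts; apply: IH => // z z_u.
by apply: fg; apply: In_flatten z_u; exact: List.in_map.
Qed.

Lemma osubst_Some Z Y (f : Z -> option (tree D Y)) t :
  (forall z, List.In z (leaves t) -> f z <> None) -> osubst f t <> None.
Proof.
elim/tree_ind_In: t => [z|d ts IH] defined /=; first by apply: defined; left.
case E: (oseq _) => //; case: (@oseq_Some _ (map (osubst f) ts)); last by rewrite E.
move=> o /List.in_map_iff [u [<- u_ts]]; apply: IH => // z z_u.
by apply: defined; apply: In_flatten z_u; exact: List.in_map.
Qed.

Lemma osubst_tmap Z Z' Y (m : Z -> Z') (g : Z' -> option (tree D Y)) t :
  osubst g (tmap m t) = osubst (g \o m) t.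
Proof.
by elim/tree_ind_In: t => //= d ts IH; rewrite -map_comp (map_ext_In IH).
Qed.

Lemma osubst_assoc Z Z' Y (h : Z -> option (tree D Z')) (g : Z' -> option (tree D Y)) t :
  obind (osubst g) (osubst h t) = osubst (fun z => obind (osubst g) (h z)) t.
Proof.
elim/tree_ind_In: t => //= d ts IH.
have := oseq_bind (osubst g) (map (osubst h) ts); rewrite -map_comp (map_ext_In IH).
by case: (oseq (map (osubst h) ts)) => [xs|] /= <-.
Qed.

Lemma osubst_ground Z Y (f : Z -> option (tree D Y)) (t : tree D void) :
  osubst f (tmap (@of_void Z) t) = Some (tmap (@of_void Y) t).
Proof.
elim/tree_ind_In: t => [[]|d ts IH] /=; rewrite -map_comp (map_ext_In IH).
by rewrite (map_comp Some (tmap _)) oseq_mapSome.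
Qed.

Lemma tmap_ground (t : tree D void) (m : void -> void) : tmap m t = t.
Proof.
by elim/tree_ind_In: t => [[]|d ts IH] /=; rewrite (map_ext_In IH) map_id.
Qed.

Lemma leaves_osubst Z Y (f : Z -> option (tree D Y)) t r z :
  osubst f t = Some r -> List.In z (leaves r) ->
  exists y r', [/\ List.In y (leaves t), f y = Some r' & List.In z (leaves r')].
Proof.
elim/tree_ind_In: t r => [y|d ts IH] r /=; first by move=> fy z_r; exists y, r; split=> //; left.
case E: (oseq _) => [rs|] //= [<-] /= z_in; have [l l_rs z_l] := flatten_In z_in.
have [r0 [l_r0 r0_rs]] := proj1 (List.in_map_iff _ _ _) l_rs; subst l.
have [t0 t0_ts ft0] := map_eq_In (oseq_map E) r0_rs.
have [y [r' [y_t0 fy z_r']]] := IH t0 t0_ts _ ft0 z_l.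
by exists y, r'; split=> //; apply: In_flatten y_t0; exact: List.in_map.
Qed.

Lemma subtree_osubst Z Y (f : Z -> option (tree D Y)) v R T u :
  osubst f R = Some T -> subtree R v = Some u ->
  exists2 T', subtree T v = Some T' & osubst f u = Some T'.
Proof.
elim: v R T => [|i v IH] R T; first by move=> fR [<-]; exists T.
case: R => [z|d rs] //=; case E: (oseq _) => [Ts|] //= [<-] /=.
have rs_Ts := oseq_map E.
have size_Ts : size Ts = size rs by rewrite -(size_map Some) -rs_Ts size_map.
rewrite size_Ts; case: ifP => // /andP [i_gt0 i_le].
have i_lt : i.-1 < size rs by case: i i_gt0 i_le.
apply: IH; have := congr1 (fun l => nth None l i.-1) rs_Ts.
by rewrite /= (nth_map (Node d rs)) // (nth_map (Node d Ts)) ?size_Ts.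
Qed.

Lemma tle_node Z (d d' : D) (ts ts' : seq (tree D (option Z))) :
  tle (Node d ts) (Node d' ts') ->
  [/\ d = d', size ts = size ts' &
      forall j t0, j < size ts -> tle (nth t0 ts j) (nth t0 ts' j)].
Proof.
move=> /= [-> tle_ts].
suff [-> tle_j] : size ts = size ts' /\
    (forall j t0, j < size ts -> tle (nth t0 ts j) (nth t0 ts' j)) by [].
elim: ts ts' tle_ts => [|t ts IH] [|t' ts'] //= [tle_t /IH [-> tle_rest]].
by split=> // -[|j] t0 //= /tle_rest.
Qed.

Lemma osubst_eq_by_prefix W Z Z' Y (t : tree D W) (u : tree D Z) (m : Z -> Z')
    (f : W -> option (tree D Y)) (g : Z -> option (tree D Y)) :
  tle (Phi (Z := Z') t) (nobot (tmap m u)) ->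
  (forall v w u', subtree t v = Some (Leaf w) -> subtree u v = Some u' ->
     osubst g u' = f w) ->
  osubst f t = osubst g u.
Proof.
elim/tree_ind_In: t u => [w|d ts IH] u prefix agree; first by rewrite /= (agree [::] w u).
case: u prefix agree => [z|d' us] //= /tle_node [<- size_us tle_j] agree.
rewrite -map_comp !size_map in size_us tle_j.
congr (omap _ (oseq _)); apply: (eq_from_nth (x0 := None)); first by rewrite !size_map.
move=> j; rewrite size_map => j_lt; have j_lt' : j < size us by rewrite -size_us.
rewrite (nth_map (Node d ts)) // (nth_map (Node d us)) //.
apply: IH; first exact: nth_In.
- have := tle_j j (Leaf None) j_lt.
  by rewrite (nth_map (Node d ts)) // (nth_map (Node d us)).
- move=> v w u' t_v u_v; apply: (agree (j.+1 :: v)) => /=.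
    by rewrite j_lt.
  by rewrite j_lt'.
Qed.
End Trees.

Section Runs.
Variables (S D Q P : Type) (K : dtla S D Q P).

Definition child_out (ss : seq (tree S void)) (z : Q * nat) : option (tree D void) :=
  if z.2 is j.+1 then nth (fun _ => None) [seq qM K ^~ s | s <- ss] j z.1 else None.

Lemma qM_node q a ss :
  qM K q (Node a ss) = obind (osubst (child_out ss)) (dl_rhs K q a (map (stateM K) ss)).
Proof. by []. Qed.

Lemma child_out_var d ss q j : j < size ss ->
  child_out ss (q, j.+1) = qM K q (nth d ss j).
Proof. by move=> j_lt; rewrite /child_out /= (nth_map d). Qed.
End Runs.

(* M is the dtla, N the dtop whose state q is given in M-terms by
   phi(q, -) (the tuple (t_1..t_n) of the paper, indexed by P_M). *)
Section Invariant.
Variables (S D QM : Type) (PM : eqType) (QN : Type).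
Variables (rkS : S -> nat) (rkD : D -> nat).
Variables (M : dtla S D QM PM) (rho : QM -> PM) (N : dtop S D QN).
Variable phi : QN -> PM -> tree D (QM * PM).

Hypothesis M_wf : dtla_wf rkS rkD M.
Hypothesis M_uniform : la_uniform rkS M rho.
Hypothesis N_wf : dtop_wf rkS rkD N.
Hypothesis phi_leaves :
  forall q p z, List.In z (leaves (phi q p)) -> z.2 = p /\ rho z.1 = p.
(* Conditions (i)-(iv); of (i) and (iii) only the lower-bound half is used. *)
Hypothesis axiom_prefix :
  is_glb (Phi (dt_ax N)) (fun t => exists p, t = nobot (OmegaA rho (dl_ax M p))).
Hypothesis axiom_states : forall v q p, subtree (dt_ax N) v = Some (Leaf q) ->
  subtree (OmegaA rho (dl_ax M p)) v = Some (phi q p).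
Hypothesis rhs_prefix : forall q a, is_glb (Phi (dt_rhs N q a))
  (fun t => exists ps r, size ps = rkS a /\
     rhsMphi M phi q a ps = Some r /\ t = nobot (OmegaR rho r)).
Hypothesis rhs_states : forall q qb a i ss p v, i < rkS a -> size ss = rkS a ->
  (forall j, j < rkS a -> j != i -> wf rkS (nth (Node a [::]) ss j)) ->
  is_bot_node (Phi (Z := QM * PM) (dt_rhs N q a)) v ->
  subtree (dt_rhs N q a) v = Some (Leaf (qb, i.+1)) ->
  let ps := [seq (if j == i then p else stateM M (nth (Node a [::]) ss j))
            | j <- iota 0 (rkS a)] in
  obind (fun r => obind (fun t => subtree t v) (PsiM M rho i.+1 ss (Node a [::]) r))
        (rhsMphi M phi q a ps) = Some (phi qb p).

Definition phi_out (q : QN) (s : tree S void) : option (tree D void) :=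
  osubst (fun z : QM * PM => qM M z.1 s) (phi q (stateM M s)).

(* rhs_{M,phi} is defined: by la-uniformity every rule it calls exists. *)
Lemma rhsMphi_defined q a ps : size ps = rkS a -> exists R, rhsMphi M phi q a ps = Some R.
Proof.
move=> size_ps; case E: (rhsMphi _ _ _ _ _) => [R|]; first by exists R.
exfalso; move: E; rewrite /rhsMphi /=; apply: osubst_Some => z /phi_leaves [-> rho_z].
by rewrite eqxx; apply/(M_uniform.2.2.2 _ _ _ size_ps); rewrite rho_z.
Qed.

Lemma rhsMphi_vars q a ps R z : size ps = rkS a ->
  rhsMphi M phi q a ps = Some R -> List.In z (leaves R) -> 0 < z.2 <= rkS a.
Proof.
move=> size_ps R_def /(leaves_osubst R_def) [y [r [/phi_leaves [-> _] + z_r]]].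
by rewrite eqxx => /(M_wf.2 _ _ _ _ size_ps) [_]; apply.
Qed.

Lemma rhsMphi_subst Y (g : QM * nat -> option (tree D Y)) q a ps :
  obind (osubst g) (rhsMphi M phi q a ps)
  = osubst (fun z => obind (osubst g) (dl_rhs M z.1 a ps)) (phi q (dl_delta M a ps)).
Proof.
rewrite /rhsMphi osubst_assoc; apply: osubst_ext => z /phi_leaves [-> _].
by rewrite eqxx.
Qed.

Lemma PsiM_child_out i ss d t :
  obind (osubst (fun z : QM * PM => qM M z.1 (nth d ss i))) (PsiM M rho i.+1 ss d t)
  = osubst (fun z : QM * nat => if z.2 is j.+1 then qM M z.1 (nth d ss j) else None) t.
Proof.
rewrite /PsiM osubst_assoc; apply: osubst_ext => [[q' [|j]]] _ //=.
case: eqP => [[->] // | _].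
by case: (qM M q' _) => [o|] //=; rewrite osubst_ground tmap_ground.
Qed.

(* The leaf case of the inductive step: at a variable x_{i+1} of
   rhs_N(q, a), condition (iv) and the induction hypothesis for s_i show
   that the subtree of rhs_{M,phi} at the same node yields q_b,N(s_i). *)
Lemma invariant_at_var q qb a ss i v R u :
  size ss = rkS a -> (forall s, List.In s ss -> wf rkS s) -> i < size ss ->
  qM (dtop_as_dtla N) qb (nth (Node a [::]) ss i) = phi_out qb (nth (Node a [::]) ss i) ->
  subtree (dt_rhs N q a) v = Some (Leaf (qb, i.+1)) ->
  rhsMphi M phi q a (map (stateM M) ss) = Some R -> subtree R v = Some u ->
  osubst (child_out M ss) u = qM (dtop_as_dtla N) qb (nth (Node a [::]) ss i).
Proof.
move=> size_ss wf_ss i_lt IH N_v R_def R_v.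
set si := nth (Node a [::]) ss i.
have size_ps : size (map (stateM M) ss) = rkS a by rewrite size_map.
have ps_i : [seq (if j == i then stateM M si else stateM M (nth (Node a [::]) ss j))
              | j <- iota 0 (rkS a)] = map (stateM M) ss.
  by rewrite -size_ss map_nth_replace_self.
have wf_j j : j < rkS a -> j != i -> wf rkS (nth (Node a [::]) ss j).
  by rewrite -size_ss => j_lt _; apply/wf_ss/nth_In.
have bot_v : is_bot_node (Phi (Z := QM * PM) (dt_rhs N q a)) v.
  by rewrite /is_bot_node /Phi subtree_tmap N_v.
have i_lt' : i < rkS a by rewrite -size_ss.
have := @rhs_states q qb a i ss (stateM M si) v i_lt' size_ss wf_j bot_v N_v.
rewrite /= ps_i R_def /=; case Psi_def: (PsiM _ _ _ _ _ _) => [T|] //= T_v.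
have [T' T_v' Psi_u] := subtree_osubst Psi_def R_v.
move: T_v; rewrite T_v' => -[T'_phi].
rewrite IH /phi_out -T'_phi -[RHS]/(obind _ (Some T')) -Psi_u PsiM_child_out.
apply: osubst_ext => -[q' j] /(leaves_subtree R_v) /(rhsMphi_vars size_ps R_def).
by case: j => // j /andP [_ j_le]; rewrite (child_out_var _ (Node a [::])) // size_ss.
Qed.

(* The inductive step of the invariant, comparing rhs_N(q, a) with
   rhs_{M,phi}(q, a, p_1..p_k) through condition (iii). *)
Lemma invariant_node a ss : wf rkS (Node a ss) ->
  (forall i, i < size ss -> forall q,
     qM (dtop_as_dtla N) q (nth (Node a [::]) ss i) = phi_out q (nth (Node a [::]) ss i)) ->
  forall q, qM (dtop_as_dtla N) q (Node a ss) = phi_out q (Node a ss).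
Proof.
move=> /andP [/eqP size_ss all_wf] IH q.
have size_ps : size (map (stateM M) ss) = rkS a by rewrite size_map.
have [R R_def] := rhsMphi_defined q size_ps.
rewrite qM_node /=.
have -> : phi_out q (Node a ss) = osubst (child_out M ss) R.
  by rewrite -[RHS]/(obind (osubst (child_out M ss)) (Some R)) -R_def rhsMphi_subst.
apply: (osubst_eq_by_prefix (m := fun z : QM * nat => (z.1, rho z.1))).
  by apply: (proj1 (rhs_prefix q a)); exists (map (stateM M) ss), R.
move=> v [qb j] u N_v R_v.
have /andP [j_gt0 j_le] := (N_wf.2 q a).2 _ (leaves_subtree N_v (or_introl erefl)).
case: j j_gt0 j_le N_v => // i _ i_lt N_v; rewrite -size_ss in i_lt.
rewrite (child_out_var _ (Node a [::])) //.
exact: invariant_at_var (fun s => all_In all_wf) i_lt (IH i i_lt qb) N_v R_def R_v.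
Qed.

Lemma invariant s : wf rkS s -> forall q, qM (dtop_as_dtla N) q s = phi_out q s.
Proof.
elim/tree_ind_In: s => [[]|a ss IH] wf_s; apply: invariant_node => // i i_lt q.
move: wf_s => /= /andP [_ all_wf]; have s_in := nth_In (Node a [::]) i_lt.
exact: IH s_in (all_In all_wf s_in) q.
Qed.

(* Conditions (i) and (ii) transfer the invariant to the axioms. *)
Lemma N_equiv_M s : wf rkS s -> transM (dtop_as_dtla N) s = transM M s.
Proof.
move=> wf_s; rewrite /transM /gtrans /=.
apply: (osubst_eq_by_prefix (m := fun q : QM => (q, rho q))).
  by apply: (proj1 axiom_prefix); exists (stateM M s).
move=> v q u N_v M_v.
have := axiom_states (stateM M s) N_v; rewrite /OmegaA subtree_tmap M_v => -[u_phi].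
rewrite -[RHS]/(qM (dtop_as_dtla N) q s) invariant // /phi_out -u_phi osubst_tmap.
by apply: osubst_ext.
Qed.
End Invariant.

Unset Implicit Arguments.
Theorem mainTheorem11 (S D : finType) (rkS : S -> nat) (rkD : D -> nat)
  (QM PM : finType) (M : dtla S D QM PM) (rho : QM -> PM)
  (QN : finType) (emb : QN -> {ffun PM -> tree D (QM * PM)}) (N : dtop S D QN) :
  dtla_wf rkS rkD M ->
  canonical rkS M rho ->
  1 < #|PM| ->
  injective emb ->
  dtop_wf rkS rkD N ->
  (forall q, reachable rkS (dtop_as_dtla N) q) ->
  (forall q p z, List.In z (leaves (emb q p)) -> z.2 = p /\ rho z.1 = p) ->
  (* (i) *)
  is_glb (Phi (dt_ax N)) (fun t => exists p, t = nobot (OmegaA rho (dl_ax M p))) ->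
  (* (ii) *)
  (forall v q p, subtree (dt_ax N) v = Some (Leaf q) ->
     subtree (OmegaA rho (dl_ax M p)) v = Some (emb q p)) ->
  (* (iii) *)
  (forall q a, is_glb (Phi (dt_rhs N q a))
     (fun t => exists ps r, size ps = rkS a /\
        rhsMphi M (fun q p => emb q p) q a ps = Some r /\ t = nobot (OmegaR rho r))) ->
  (* (iv) ; i is 0-based here, i.e. the variable is x_(i+1) *)
  (forall q qb a i ss p v, i < rkS a -> size ss = rkS a ->
     (forall j, j < rkS a -> j != i -> wf rkS (nth (Node a [::]) ss j)) ->
     is_bot_node (Phi (Z:=QM * PM) (dt_rhs N q a)) v ->
     subtree (dt_rhs N q a) v = Some (Leaf (qb, i.+1)) ->
     let ps := [seq (if j == i then p else stateM M (nth (Node a [::]) ss j))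
               | j <- iota 0 (rkS a)] in
     obind (fun r => obind (fun t => subtree t v) (PsiM M rho i.+1 ss (Node a [::]) r))
           (rhsMphi M (fun q p => emb q p) q a ps) = Some (emb qb p)) ->
  forall s, wf rkS s -> transM (dtop_as_dtla N) s = transM M s.
Proof.
move=> M_wf [_ M_uniform _ _ _] _ _ N_wf _ phi_leaves cond_i cond_ii cond_iii cond_iv.
exact: N_equiv_M M_wf M_uniform N_wf phi_leaves cond_i cond_ii cond_iii cond_iv.
Qed.
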